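(* Let $\mathbb{F}$ be a field. The categories $\mathbf{Assoc}_1$ and $\mathbf{CAssoc}_1$ are action representable. More precisely, for every unitary associative algebra $X$ there is a natural isomorphism of functors $\mathbf{Assoc}^{\mathrm{op}}\to\mathbf{Set}$ $$\mathrm{SplExt}(-,U(X))\cong \mathrm{Hom}_{\mathbf{Assoc}}(-,U(X)),$$ and for every unitary commutative associative algebra $X$ there is a natural isomorphism of functors $\mathbf{CAssoc}^{\mathrm{op}}\to\mathbf{Set}$ $$\mathrm{SplExt}(-,U(X))\cong \mathrm{Hom}_{\mathbf{CAssoc}}(-,U(X));$$ that is, the actor of $X$ is (isomorphic to) $X$ itself.
   Context: All algebras are over a field $\mathbb{F}$. $\mathbf{Assoc}$ is the category of (not necessarily unitary) associative $\mathbb{F}$-algebras, $\mathbf{CAssoc}$ its full subcategory of commutative ones. For a variety $\mathcal{V}$ of non-associative algebras closed under adjoining an external unit, $\mathcal{V}_1$ denotes the category of algebras in $\mathcal{V}$ having a multiplicative unit, with unit-preserving algebra homomorphisms, and $U\colon\mathcal{V}_1\to\mathcal{V}$ is the forgetful functor. For objects $B,X$ of $\mathcal{V}$, a split extension of $B$ by $X$ is a diagram $X\xrightarrow{k}A\underset{\beta}{\overset{\alpha}{\rightleftarrows}}B$ in $\mathcal{V}$ with $\alpha\circ\beta=\mathrm{id}_B$ and $(X,k)$ a kernel of $\alpha$; $\mathrm{SplExt}(B,X)$ is the set of isomorphism classes of such split extensions, and $\mathrm{SplExt}(-,X)\colon\mathcal{V}^{\mathrm{op}}\to\mathbf{Set}$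 is the functor acting on morphisms $f\colon B'\to B$ by pullback along $f$. The category $\mathcal{V}_1$ is called action representable if for every object $X$ of $\mathcal{V}_1$ the functor $\mathrm{SplExt}(-,U(X))\colon\mathcal{V}^{\mathrm{op}}\to\mathbf{Set}$ is representable, i.e. naturally isomorphic to $\mathrm{Hom}_{\mathcal{V}}(-,T)$ for some object $T$ of $\mathcal{V}$ (called the actor of $X$). *)

From HB Require Import structures.
From mathcomp Require Import all_boot all_algebra.
Set Implicit Arguments. Unset Strict Implicit. Unset Printing Implicit Defensive.
Import GRing.Theory.
Local Open Scope ring_scope.

Record nuAlg (F : fieldType) : Type := NuAlg {
  carrier :> lmodType F;
  amul : carrier -> carrier -> carrier;
  amulA : associative amul;
  amulDl : left_distributive amul +%R;
  amulDr : right_distributive amul +%R;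
  amulZl : forall (a : F) (x y : carrier), amul (a *: x) y = a *: amul x y;
  amulZr : forall (a : F) (x y : carrier), amul x (a *: y) = a *: amul x y }.

Section Defs.
Variable F : fieldType.

Definition Assoc_obj : nuAlg F -> Prop := fun _ => True.
Definition is_comm (A : nuAlg F) : Prop := forall x y : A, amul x y = amul y x.
Definition CAssoc_obj : nuAlg F -> Prop := is_comm.

Definition has_unit (A : nuAlg F) : Prop :=
  exists e : A, forall x : A, amul e x = x /\ amul x e = x.

Definition is_hom (A B : nuAlg F) (f : A -> B) : Prop :=
  (forall x y : A, f (x + y) = f x + f y) /\
  (forall (a : F) (x : A), f (a *: x) = a *: f x) /\
  (forall x y : A, f (amul x y) = amul (f x) (f y)).

(* A split extension of B by X in the category with objects C:
   X --k--> A <==alpha/beta==> B, alpha o beta = id, (X,k) a kernel of alpha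
   (kernels in a variety of algebras: k injective with image ker alpha). *)
Record splitExt (C : nuAlg F -> Prop) (B X : nuAlg F) : Type := SplitExt {
  se_A : nuAlg F;
  se_AC : C se_A;
  se_alpha : se_A -> B;
  se_beta : B -> se_A;
  se_k : X -> se_A;
  se_alpha_hom : is_hom se_alpha;
  se_beta_hom : is_hom se_beta;
  se_k_hom : is_hom se_k;
  se_split : forall b : B, se_alpha (se_beta b) = b;
  se_k_inj : injective se_k;
  se_ker : forall a : se_A, se_alpha a = 0 <-> exists x : X, se_k x = a }.

Arguments se_A {C B X} s.
Arguments se_AC {C B X} s.
Arguments se_alpha {C B X} s _.
Arguments se_beta {C B X} s _.
Arguments se_k {C B X} s _.

Definition se_iso (C : nuAlg F -> Prop) (B X : nuAlg F)
    (E1 E2 : splitExt C B X) : Prop :=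
  exists (phi : se_A E1 -> se_A E2) (psi : se_A E2 -> se_A E1),
    [/\ is_hom phi, is_hom psi, cancel phi psi, cancel psi phi &
     [/\ forall x : X, phi (se_k E1 x) = se_k E2 x,
         forall a : se_A E1, se_alpha E2 (phi a) = se_alpha E1 a &
         forall b : B, phi (se_beta E1 b) = se_beta E2 b]].

(* E' is (a representative of) the pullback of E along f : B' -> B,
   i.e. SplExt(f)(E) = [E']. *)
Definition is_pullback (C : nuAlg F -> Prop) (B B' X : nuAlg F) (f : B' -> B)
    (E : splitExt C B X) (E' : splitExt C B' X) : Prop :=
  exists p : se_A E' -> se_A E,
    [/\ is_hom p,
        forall a' : se_A E', se_alpha E (p a') = f (se_alpha E' a'),
        forall b' : B', p (se_beta E' b') = se_beta E (f b'),
        forall x : X, p (se_k E' x) = se_k E x &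
        forall Y : nuAlg F, C Y ->
          forall (u : Y -> se_A E) (v : Y -> B'), is_hom u -> is_hom v ->
          (forall y : Y, se_alpha E (u y) = f (v y)) ->
          exists h : Y -> se_A E',
            [/\ is_hom h, (forall y : Y, p (h y) = u y),
                (forall y : Y, se_alpha E' (h y) = v y) &
                forall h' : Y -> se_A E', is_hom h' ->
                  (forall y : Y, p (h' y) = u y) ->
                  (forall y : Y, se_alpha E' (h' y) = v y) ->
                  forall y, h' y = h y]].

(* SplExt(-, X) is naturally isomorphic to Hom_C(-, T) on C^op:
   a family Phi_B : SplExt(B,X) -> Hom_C(B,T), well defined on isomorphism
   classes, bijective on isomorphism classes, and natural w.r.t. pullback. *)
Definition splext_represented_by (C : nuAlg F -> Prop) (X T : nuAlg F) : Prop :=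
  exists Phi : forall B : nuAlg F, splitExt C B X -> B -> T,
    [/\ (forall B (E : splitExt C B X), C B -> is_hom (Phi B E)),
        (forall B (E1 E2 : splitExt C B X), C B ->
            se_iso E1 E2 -> Phi B E1 =1 Phi B E2),
        (forall B (E1 E2 : splitExt C B X), C B ->
            Phi B E1 =1 Phi B E2 -> se_iso E1 E2),
        (forall B, C B -> forall g : B -> T, is_hom g ->
            exists E : splitExt C B X, Phi B E =1 g) &
        (forall B B' : nuAlg F, C B -> C B' -> forall f : B' -> B, is_hom f ->
            forall (E : splitExt C B X) (E' : splitExt C B' X),
              is_pullback f E E' -> Phi B' E' =1 (Phi B E \o f))].

Definition action_representable (C : nuAlg F -> Prop) : Prop :=
  forall X : nuAlg F, C X -> has_unit X ->
    exists T : nuAlg F, C T /\ splext_represented_by C X T.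

End Defs.

(* If [X] has a unit [e], then in any split extension [X --k--> A <=> B] the
   element [u = k e] is a central idempotent of [A]: both [u a] and [a u] lie
   in the ideal [k X], on which [u] acts as the identity.  Hence
   [b |-> k^-1 (u * beta b)] is an algebra map [B -> X].  Every [a] splits
   uniquely as [k x + beta b], and the product of two such sums only involves
   the multiplications of [X] and [B] and this map, so the map classifies the
   extension up to isomorphism.  Conversely every [g : B -> X] is realised by
   the semidirect product [X x B] with
   [(x, b) (x', b') = (x x' + x (g b') + (g b) x', b b')]. *)

From mathcomp Require Import all_boot all_algebra.
From Stdlib Require Import ClassicalEpsilon.
Set Implicit Arguments. Unset Strict Implicit. Unset Printing Implicit Defensive.
Import GRing.Theory.
Local Open Scope ring_scope.

Section AlgebraFacts.
Variable F : fieldType.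
Implicit Types A B : nuAlg F.

Lemma amul0l A (x : A) : amul 0 x = 0.
Proof. by apply: (addrI (amul 0 x)); rewrite -amulDl !addr0. Qed.

Lemma amul0r A (x : A) : amul x 0 = 0.
Proof. by apply: (addrI (amul x 0)); rewrite -amulDr !addr0. Qed.

Variables (A B : nuAlg F) (f : A -> B).
Hypothesis hom_f : is_hom f.

Lemma is_homD x y : f (x + y) = f x + f y.
Proof. by case: hom_f. Qed.

Lemma is_homZ (a : F) x : f (a *: x) = a *: f x.
Proof. by case: hom_f => _ []. Qed.

Lemma is_homM x y : f (amul x y) = amul (f x) (f y).
Proof. by case: hom_f => _ []. Qed.

Lemma is_hom0 : f 0 = 0.
Proof. by apply: (addrI (f 0)); rewrite -is_homD !addr0. Qed.

Lemma is_homB x y : f (x - y) = f x - f y.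
Proof. by apply: (addIr (f y)); rewrite -is_homD !subrK. Qed.

End AlgebraFacts.

Section SplitExtension.
Variables (F : fieldType) (C : nuAlg F -> Prop) (B X : nuAlg F).
Variable E : splitExt C B X.

Local Notation A := (se_A E).
Local Notation k := (se_k E).
Local Notation alpha := (se_alpha (s:=E)).
Local Notation beta := (se_beta E).

Let kD := is_homD (se_k_hom E).
Let kZ := is_homZ (se_k_hom E).
Let kM := is_homM (se_k_hom E).
Let alphaD := is_homD (se_alpha_hom E).
Let alphaZ := is_homZ (se_alpha_hom E).
Let alphaM := is_homM (se_alpha_hom E).
Let betaD := is_homD (se_beta_hom E).
Let betaZ := is_homZ (se_beta_hom E).
Let betaM := is_homM (se_beta_hom E).
Let k_inj := se_k_inj (s:=E).

Definition se_kinv (a : A) : X := epsilon (inhabits 0) (fun x => k x = a).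

Lemma se_kinvK a : alpha a = 0 -> k (se_kinv a) = a.
Proof. by move=> /(se_ker (s:=E)); apply: epsilon_spec. Qed.

Lemma se_alpha_k x : alpha (k x) = 0.
Proof. by apply/(se_ker (s:=E)); exists x. Qed.

Lemma se_alpha_sum x b : alpha (k x + beta b) = b.
Proof. by rewrite alphaD se_alpha_k se_split add0r. Qed.

Definition se_proj (a : A) : X := se_kinv (a - beta (alpha a)).

Lemma se_projE a : k (se_proj a) = a - beta (alpha a).
Proof. by rewrite se_kinvK // (is_homB (se_alpha_hom E)) se_split subrr. Qed.

Lemma se_proj_decomp a : k (se_proj a) + beta (alpha a) = a.
Proof. by rewrite se_projE subrK. Qed.

Lemma se_proj_sum x b : se_proj (k x + beta b) = x.
Proof. by apply: k_inj; rewrite se_projE se_alpha_sum addrK. Qed.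

Lemma se_projD a a' : se_proj (a + a') = se_proj a + se_proj a'.
Proof. by apply: k_inj; rewrite kD !se_projE alphaD betaD opprD addrACA. Qed.

Lemma se_projZ (c : F) a : se_proj (c *: a) = c *: se_proj a.
Proof. by apply: k_inj; rewrite kZ !se_projE alphaZ betaZ scalerBr. Qed.

Variable e : X.

Definition se_unit : A := k e.

Definition se_act (b : B) : X := se_kinv (amul se_unit (beta b)).

Lemma se_actE b : k (se_act b) = amul se_unit (beta b).
Proof. by rewrite se_kinvK // alphaM se_alpha_k amul0l. Qed.

Hypothesis e_unit : forall x : X, amul e x = x /\ amul x e = x.

Lemma se_unit_idem : amul se_unit se_unit = se_unit.
Proof. by rewrite -kM (proj1 (e_unit e)). Qed.

Lemma se_unit_central a : amul se_unit a = amul a se_unit.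
Proof.
have [x kx] : exists x, k x = amul se_unit a.
  by apply/(se_ker (s:=E)); rewrite alphaM se_alpha_k amul0l.
have [y ky] : exists y, k y = amul a se_unit.
  by apply/(se_ker (s:=E)); rewrite alphaM se_alpha_k amul0r.
have ua_u : amul (amul se_unit a) se_unit = amul se_unit a.
  by rewrite -kx -kM (proj2 (e_unit x)).
have u_au : amul se_unit (amul a se_unit) = amul a se_unit.
  by rewrite -ky -kM (proj1 (e_unit y)).
by rewrite -ua_u -amulA u_au.
Qed.

Lemma se_act_hom : is_hom se_act.
Proof.
split; [|split] => *; apply: k_inj.
- by rewrite kD !se_actE betaD amulDr.
- by rewrite kZ !se_actE betaZ amulZr.
rewrite kM !se_actE betaM -amulA (amulA (beta _)) -se_unit_central.
by rewrite !amulA se_unit_idem.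
Qed.

Lemma se_mul_sum x b x' b' :
  amul (k x + beta b) (k x' + beta b') =
  k (amul x x' + amul x (se_act b') + amul (se_act b) x') + beta (amul b b').
Proof.
have x_b' : amul (k x) (beta b') = k (amul x (se_act b')).
  by rewrite kM se_actE amulA -kM (proj2 (e_unit x)).
have b_x' : amul (beta b) (k x') = k (amul (se_act b) x').
  by rewrite kM se_actE se_unit_central -amulA -kM (proj1 (e_unit x')).
rewrite amulDl !amulDr x_b' b_x' -betaM -kM !kD.
by rewrite addrA.
Qed.

End SplitExtension.

Section Transport.
Variables (F : fieldType) (C : nuAlg F -> Prop) (B X : nuAlg F).
Variables E1 E2 : splitExt C B X.

Definition se_transport (a : se_A E1) : se_A E2 :=
  se_k E2 (se_proj a) + se_beta E2 (se_alpha a).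

Lemma se_transport_sum x b :
  se_transport (se_k E1 x + se_beta E1 b) = se_k E2 x + se_beta E2 b.
Proof. by rewrite /se_transport se_proj_sum se_alpha_sum. Qed.

Variables (e : X) (e_unit : forall x : X, amul e x = x /\ amul x e = x).

Lemma se_transport_hom : se_act E1 e =1 se_act E2 e -> is_hom se_transport.
Proof.
move=> act12; split; [|split].
- move=> a a'; rewrite /se_transport se_projD (is_homD (se_alpha_hom E1)).
  by rewrite (is_homD (se_k_hom E2)) (is_homD (se_beta_hom E2)) addrACA.
- move=> c a; rewrite /se_transport se_projZ (is_homZ (se_alpha_hom E1)).
  by rewrite (is_homZ (se_k_hom E2)) (is_homZ (se_beta_hom E2)) scalerDr.
move=> a a'; rewrite -(se_proj_decomp a) -(se_proj_decomp a').
by rewrite (se_mul_sum _ e_unit) !se_transport_sum (se_mul_sum _ e_unit) !act12.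
Qed.

End Transport.

Arguments se_transport {F C B X} E1 E2 a.

Section Classification.
Variables (F : fieldType) (C : nuAlg F -> Prop) (X : nuAlg F) (e : X).
Hypothesis e_unit : forall x : X, amul e x = x /\ amul x e = x.

Lemma se_transportK (B : nuAlg F) (E1 E2 : splitExt C B X) :
  cancel (se_transport E1 E2) (se_transport E2 E1).
Proof. by move=> a; rewrite se_transport_sum se_proj_decomp. Qed.

Lemma se_iso_of_act (B : nuAlg F) (E1 E2 : splitExt C B X) :
  se_act E1 e =1 se_act E2 e -> se_iso E1 E2.
Proof.
move=> act12; exists (se_transport E1 E2), (se_transport E2 E1); split.
- exact: se_transport_hom.
- by apply: se_transport_hom => // b; rewrite act12.
- exact: se_transportK.
- exact: se_transportK.
split.
- move=> x; have := se_transport_sum E1 E2 x 0.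
  by rewrite !(is_hom0 (se_beta_hom _)) !addr0.
- by move=> a; rewrite /se_transport se_alpha_sum.
- move=> b; have := se_transport_sum E1 E2 0 b.
  by rewrite !(is_hom0 (se_k_hom _)) !add0r.
Qed.

Lemma se_act_iso (B : nuAlg F) (E1 E2 : splitExt C B X) :
  se_iso E1 E2 -> se_act E1 e =1 se_act E2 e.
Proof.
case=> phi [_ [phi_hom _ _ _ [phi_k _ phi_beta]]] b.
apply: (se_k_inj (s:=E2)).
by rewrite -phi_k !se_actE (is_homM phi_hom) phi_k phi_beta.
Qed.

Lemma se_act_pullback (B B' : nuAlg F) (f : B' -> B)
    (E : splitExt C B X) (E' : splitExt C B' X) :
  is_pullback f E E' -> se_act E' e =1 se_act E e \o f.
Proof.
case=> p [p_hom _ p_beta p_k _] b'; apply: (se_k_inj (s:=E)) => /=.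
by rewrite -p_k !se_actE (is_homM p_hom) p_k p_beta.
Qed.

End Classification.

Section SemidirectProduct.
Variables (F : fieldType) (X B : nuAlg F) (g : B -> X).
Hypothesis g_hom : is_hom g.

Let gD := is_homD g_hom.
Let gZ := is_homZ g_hom.
Let gM := is_homM g_hom.

Definition sdp_mul (p q : X * B) : X * B :=
  (amul p.1 q.1 + amul p.1 (g q.2) + amul (g p.2) q.1, amul p.2 q.2).

Lemma sdp_mulA : associative sdp_mul.
Proof.
case=> x b [x' b'] [x'' b'']; congr pair; last exact: amulA.
by rewrite /= !gM !amulDl !amulDr !amulA !addrA (ACl (1*3*5*2*4*6*7)%AC).
Qed.

Lemma sdp_mulDl : left_distributive sdp_mul +%R.
Proof.
case=> x b [x' b'] [x'' b'']; congr pair; last exact: amulDl.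
by rewrite /= gD !amulDl !addrA (ACl (1*3*5*2*4*6)%AC).
Qed.

Lemma sdp_mulDr : right_distributive sdp_mul +%R.
Proof.
case=> x b [x' b'] [x'' b'']; congr pair; last exact: amulDr.
by rewrite /= gD !amulDr !addrA (ACl (1*3*5*2*4*6)%AC).
Qed.

Lemma sdp_mulZl (a : F) (p q : X * B) : sdp_mul (a *: p) q = a *: sdp_mul p q.
Proof.
case: p q => x b [x' b']; congr pair; last exact: amulZl.
by rewrite /= gZ !amulZl !scalerDr.
Qed.

Lemma sdp_mulZr (a : F) (p q : X * B) : sdp_mul p (a *: q) = a *: sdp_mul p q.
Proof.
case: p q => x b [x' b']; congr pair; last exact: amulZr.
by rewrite /= gZ !amulZr !scalerDr.
Qed.

Definition sdp_alg : nuAlg F :=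
  @NuAlg F (X * B)%type sdp_mul sdp_mulA sdp_mulDl sdp_mulDr sdp_mulZl sdp_mulZr.

Lemma sdp_alg_comm : is_comm X -> is_comm B -> is_comm sdp_alg.
Proof.
move=> cX cB [x b] [x' b']; congr pair; last exact: cB.
by rewrite /= (cX x x') (cX x (g b')) (cX (g b) x') addrAC.
Qed.

Lemma sdp_inl_hom : is_hom (fun x : X => (x, 0) : sdp_alg).
Proof.
split; [|split] => *; congr pair => /=.
- by rewrite addr0.
- by rewrite scaler0.
- by rewrite (is_hom0 g_hom) amul0r amul0l !addr0.
- by rewrite amul0l.
Qed.

Lemma sdp_inr_hom : is_hom (fun b : B => (0, b) : sdp_alg).
Proof.
split; [|split] => *; congr pair => /=.
- by rewrite addr0.
- by rewrite scaler0.
- by rewrite !amul0l amul0r !addr0.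
Qed.

Lemma sdp_snd_hom : is_hom (snd : sdp_alg -> B).
Proof. by split; [|split]. Qed.

Variable C : nuAlg F -> Prop.
Hypothesis C_sdp : C sdp_alg.

Definition sdp_ext : splitExt C B X.
Proof.
refine (@SplitExt F C B X sdp_alg C_sdp snd (fun b => (0, b)) (fun x => (x, 0))
          sdp_snd_hom sdp_inr_hom sdp_inl_hom (fun _ => erefl) _ _).
- by move=> x y [].
- by case=> x b; split => [/= ->|[x' [_ <-]]]; first exists x.
Defined.

Variables (e : X) (e_unit : forall x : X, amul e x = x /\ amul x e = x).

Lemma sdp_ext_act : se_act sdp_ext e =1 g.
Proof.
move=> b; apply: (se_k_inj (s:=sdp_ext)); rewrite se_actE; congr pair => /=.
- by rewrite (is_hom0 g_hom) !amul0r add0r addr0 (proj1 (e_unit _)).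
- exact: amul0l.
Qed.

End SemidirectProduct.

Lemma splext_represented_by_self (F : fieldType) (C : nuAlg F -> Prop)
    (X : nuAlg F) :
  has_unit X ->
  (forall (B : nuAlg F) (g : B -> X) (g_hom : is_hom g),
     C B -> C (sdp_alg g_hom)) ->
  splext_represented_by C X X.
Proof.
move=> [e e_unit] C_sdp; exists (fun B E => se_act E e); split.
- by move=> B E _; apply: se_act_hom.
- by move=> B E1 E2 _; apply: se_act_iso.
- by move=> B E1 E2 _; apply: se_iso_of_act.
- move=> B CB g g_hom; exists (sdp_ext (C_sdp B g g_hom CB)).
  exact: sdp_ext_act.
- by move=> B B' _ _ f _ E E'; apply: se_act_pullback.
Qed.

Theorem theorem3p1 (F : fieldType) :
  [/\ action_representable (@Assoc_obj F),
      action_representable (@CAssoc_obj F),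
      (forall X : nuAlg F, has_unit X ->
         splext_represented_by (@Assoc_obj F) X X) &
      (forall X : nuAlg F, is_comm X -> has_unit X ->
         splext_represented_by (@CAssoc_obj F) X X)].
Proof.
have assoc_self (X : nuAlg F) :
    has_unit X -> splext_represented_by (@Assoc_obj F) X X.
  by move=> X1; apply: splext_represented_by_self X1 _.
have cassoc_self (X : nuAlg F) :
    is_comm X -> has_unit X -> splext_represented_by (@CAssoc_obj F) X X.
  move=> cX X1; apply: splext_represented_by_self X1 _ => B g g_hom cB.
  exact: sdp_alg_comm.
split => //.
- by move=> X _ X1; exists X; split => //; apply: assoc_self.
- by move=> X cX X1; exists X; split => //; apply: cassoc_self.
Qed.
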